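(* Let $\langle a\rangle$ and $\langle b\rangle$ be cyclic groups of orders $2^{\alpha}$ and $2^{\beta}$ respectively, with $\alpha\geq\beta\geq 1$, let $G=\langle a\rangle\amalg^{\mathfrak{N}_3}\langle b\rangle$ be their $3$-nilpotent product, and let $\gamma$ be an integer with $1\leq\gamma<\beta$. Let $N$ be the (central) subgroup of $G$ generated by $[a,b,a]^{2^{\gamma}}=[a,b]^{-2^{\gamma+1}}[a^2,b]^{2^{\gamma}}$ and $[a,b,b]^{2^{\gamma}}=[a,b]^{-2^{\gamma+1}}[a,b^2]^{2^{\gamma}}$, and let $K=G/N$. Then every element of $K$ can be written uniquely as $k=a^rb^s[a,b]^t[a,b,a]^u[a,b,b]^v$ (writing $a$ for $aN$, etc.), where $r$ is unique modulo $2^{\alpha}$, $s$ and $t$ are unique modulo $2^{\beta}$, and $u$ and $v$ are unique modulo $2^{\gamma}$.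
   Context: For cyclic groups $A_1,A_2$, their $3$-nilpotent product $A_1\amalg^{\mathfrak{N}_3}A_2$ is $F/F_4$, where $F=A_1*A_2$ is the free product and $F_4$ is the fourth term of the lower central series of $F$. Commutators are $[x,y]=x^{-1}y^{-1}xy$, left-normed: $[x,y,z]=[[x,y],z]$. *)

From HB Require Import structures.
From mathcomp Require Import all_boot all_fingroup all_solvable.
Set Implicit Arguments. Unset Strict Implicit. Unset Printing Implicit Defensive.
Import GroupScope.
Local Open Scope group_scope.

(* [is_nil3_product G a b m n] : G (generated by a, b) is the 3-nilpotent
   product <a> ∐^{N_3} <b> of cyclic groups of orders m and n, i.e.
   (C_m * C_n) / gamma_4(C_m * C_n), characterised by its universal property:
   G is generated by a and b, a^m = b^n = 1, gamma_4(G) = 1, and for every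
   (finite) group in which elements x, y satisfy x^m = y^n = 1 and generate a
   subgroup of class <= 3 there is a homomorphism G -> that group sending
   a |-> x, b |-> y. *)
Definition is_nil3_product (gT : finGroupType) (G : {group gT}) (a b : gT)
    (m n : nat) : Prop :=
  [/\ G :=: <<[set a; b]>>, a ^+ m = 1, b ^+ n = 1, 'L_4(G) = 1 &
      forall (hT : finGroupType) (x y : hT),
        x ^+ m = 1 -> y ^+ n = 1 -> 'L_4(<<[set x; y]>>) = 1 ->
        exists f : {morphism G >-> hT}, f a = x /\ f b = y].

(* Since G has class 3, [a,b,a] and [a,b,b] are central, and collecting
   shows that every element of G is a^r b^s [a,b]^t [a,b,a]^u [a,b,b]^v.  In K
   the exponents may be reduced modulo 2^alpha, 2^beta, 2^beta, 2^gamma and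
   2^gamma; for t this is because expanding [a, b^(2^beta)] = 1 gives
   [a,b]^(2^beta) = [a,b,b]^(-C(2^beta, 2)), which lies in N.  For uniqueness,
   right multiplication of normal forms by a and b, read on their exponents,
   defines permutations x, y of Z/2^alpha * (Z/2^beta)^2 * (Z/2^gamma)^3
   satisfying the defining relations of G and killing N.  The universal
   property of G thus yields a morphism K -> <x, y>, and the exponents of a
   normal form are read off from its image evaluated at the origin. *)

From HB Require Import structures.
From mathcomp Require Import all_boot all_fingroup all_solvable all_algebra.
From mathcomp Require Import ring.
Set Implicit Arguments. Unset Strict Implicit. Unset Printing Implicit Defensive.
Import GRing.Theory.
Import GroupScope.
Local Open Scope group_scope.

Definition nf (gT : finGroupType) (x y : gT) (r s t u v : nat) : gT :=
  x ^+ r * y ^+ s * [~ x, y] ^+ t * [~ x, y, x] ^+ u * [~ x, y, y] ^+ v.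

Lemma morph_nf (aT rT : finGroupType) (D : {group aT}) (f : {morphism D >-> rT})
    x y r s t u v : x \in D -> y \in D ->
  f (nf x y r s t u v) = nf (f x) (f y) r s t u v.
Proof.
move=> Dx Dy; rewrite /nf !morphM ?groupM ?groupX ?groupR // !morphX ?groupR //.
by rewrite !morphR ?groupR.
Qed.

Lemma morph_coset_eq (aT rT : finGroupType) (G N : {group aT})
    (f : {morphism G >-> rT}) x y :
  G \subset 'N(N) -> N \subset 'ker f -> x \in G -> y \in G ->
  coset N x = coset N y -> f x = f y.
Proof.
move=> nNG sNf Gx Gy eq_xy.
have sKf : 'ker (coset N) \subset 'ker f by rewrite ker_coset.
by have := congr1 (factm sKf nNG) eq_xy; rewrite !factmE.
Qed.

Lemma lcn3_commute (gT : finGroupType) (H : {group gT}) (x y z g : gT) :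
  'L_4(H) = 1 ->
  x \in H -> y \in H -> z \in H -> g \in H -> commute [~ x, y, z] g.
Proof.
move=> L4 Hx Hy Hz Hg; apply/commgP.
have : [~ x, y, z, g] \in 'L_4(H) by rewrite !lcnSn lcn1 !mem_commg.
by rewrite L4 inE.
Qed.

Lemma cent_gen2 (gT : finGroupType) (x y z : gT) :
  commute z x -> commute z y -> z \in 'C(<<[set x; y]>>).
Proof.
by move=> zx zy; rewrite -sub_cent1 gen_subG subUset !sub1set !cent1E -zx -zy !eqxx.
Qed.

Lemma lcn3_gen2 (gT : finGroupType) (x y : gT) :
  commute [~ x, y] x -> commute [~ x, y] y -> 'L_3(<<[set x; y]>>) = 1.
Proof.
move=> cx cy.
have defH : <<[set x; y]>> = <[x]> <*> <[y]> by rewrite joing_idl joing_idr.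
have cH : [~ x, y] \in 'C(<[x]> <*> <[y]>) by rewrite -defH cent_gen2.
rewrite lcnSn lcnSn lcn1 -derg1 defH der1_joing_cycles //; apply/commG1P.
by rewrite cycle_subG -defH cent_gen2.
Qed.

Lemma lcn4_gen2 (gT : finGroupType) (x y : gT) :
  commute [~ x, y, x] x -> commute [~ x, y, x] y ->
  commute [~ x, y, y] x -> commute [~ x, y, y] y ->
  'L_4(<<[set x; y]>>) = 1.
Proof.
move=> dx dy ex ey; set H := <<[set x; y]>>.
set Z := <<[set [~ x, y, x]; [~ x, y, y]]>>.
have cZH : Z \subset 'C(H) by rewrite gen_subG subUset !sub1set !cent_gen2.
have nZH : H \subset 'N(Z) by rewrite cents_norm // centsC.
have [xN yN] : x \in 'N(Z) /\ y \in 'N(Z).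
  by split; apply: (subsetP nZH); rewrite mem_gen // !inE eqxx ?orbT.
have sL3Z : 'L_3(H) \subset Z.
  rewrite -quotient_sub1; last exact: subset_trans (lcn_sub _ _) nZH.
  rewrite /quotient morphim_lcn //= -/(quotient H Z) quotient_gen; last first.
    exact: subset_trans (subset_gen _) nZH.
  rewrite quotientU !quotient_set1 // lcn3_gen2 //; apply/commgP.
    by rewrite -!morphR ?groupR //= coset_id // mem_gen // !inE eqxx.
  by rewrite -!morphR ?groupR //= coset_id // mem_gen // !inE eqxx orbT.
apply/trivgP; apply: subset_trans (commgSS sL3Z (subxx H)) _.
by rewrite (commG1P cZH).
Qed.

Lemma expg_eq_mod (gT : finGroupType) (z : gT) n i j :
  z ^+ n = 1 -> i = j %[mod n] -> z ^+ i = z ^+ j.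
Proof. by move=> zn eq_ij; rewrite -(expg_mod i zn) eq_ij expg_mod. Qed.

Section Collection.
Variables (gT : finGroupType) (H : {group gT}) (x y : gT).
Hypotheses (Hx : x \in H) (Hy : y \in H) (L4H : 'L_4(H) = 1).

Let c := [~ x, y].
Let d := [~ x, y, x].
Let e := [~ x, y, y].
Let dx : commute d x. Proof. exact: (lcn3_commute L4H). Qed.
Let dy : commute d y. Proof. exact: (lcn3_commute L4H). Qed.
Let ex : commute e x. Proof. exact: (lcn3_commute L4H). Qed.
Let ey : commute e y. Proof. exact: (lcn3_commute L4H). Qed.
Let cd : commute c d.
Proof. by apply: commute_sym; apply: (lcn3_commute L4H); rewrite ?groupR. Qed.
Let ce : commute c e.
Proof. by apply: commute_sym; apply: (lcn3_commute L4H); rewrite ?groupR. Qed.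
Let de : commute d e. Proof. by apply: (lcn3_commute L4H); rewrite ?groupR. Qed.

Lemma commgX_bin n : [~ x, y ^+ n] = c ^+ n * e ^+ 'C(n, 2).
Proof.
have e_y : e ^ y = e by rewrite /conjg ey mulKg.
elim: n => [|n IHn]; first by rewrite !expg0 mulg1 commg1.
rewrite expgSr commgMJ IHn conjMg !conjXg e_y conjg_mulR -/c -/e.
rewrite expgMn; last exact: commute_sym.
by rewrite binS bin1 !mulgA -expgS -mulgA -expgD addnC.
Qed.

Lemma expgc_mulx t : c ^+ t * x = x * c ^+ t * d ^+ t.
Proof. by rewrite commgC commXg. Qed.

Lemma expgc_muly t : c ^+ t * y = y * c ^+ t * e ^+ t.
Proof. by rewrite commgC commXg. Qed.

(* The exponents stand for -s and -'C(s, 2), as c ^+ #[c].-1 = c^-1. *)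
Lemma expgy_mulx s :
  y ^+ s * x = x * y ^+ s * c ^+ (#[c].-1 * s) * e ^+ (#[e].-1 * 'C(s, 2)).
Proof.
rewrite commgC -invg_comm commgX_bin (commuteX2 _ _ ce) invMg.
by rewrite !expgM -!invg_expg !expgVn mulgA.
Qed.

Let dXx n : commute (d ^+ n) x.
Proof. exact: commute_sym (commuteX n (commute_sym dx)). Qed.
Let dXy n : commute (d ^+ n) y.
Proof. exact: commute_sym (commuteX n (commute_sym dy)). Qed.
Let eXx n : commute (e ^+ n) x.
Proof. exact: commute_sym (commuteX n (commute_sym ex)). Qed.
Let eXy n : commute (e ^+ n) y.
Proof. exact: commute_sym (commuteX n (commute_sym ey)). Qed.

Lemma nf_muly r s t u v : nf x y r s t u v * y = nf x y r s.+1 t u (t + v).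
Proof.
rewrite /nf -/c -/d -/e -!mulgA eXy (mulgA (d ^+ u)) dXy.
rewrite !mulgA -(mulgA _ (c ^+ t) y) expgc_muly !mulgA -(mulgA _ (y ^+ s) y) -expgSr.
rewrite -(mulgA _ (e ^+ t) (d ^+ u)) (commuteX2 _ _ (commute_sym de)) !mulgA.
by rewrite -(mulgA _ (e ^+ t) (e ^+ v)) -expgD.
Qed.

Lemma nf_mulx r s t u v : exists i j, nf x y r s t u v * x = nf x y r.+1 s i (t + u) j.
Proof.
exists (#[c].-1 * s + t), (#[e].-1 * 'C(s, 2) + v).
rewrite /nf -/c -/d -/e -!mulgA eXx (mulgA (d ^+ u)) dXx.
rewrite !mulgA -(mulgA _ (c ^+ t) x) expgc_mulx !mulgA -(mulgA _ (y ^+ s) x) expgy_mulx.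
rewrite !mulgA -expgSr.
rewrite -(mulgA _ (e ^+ _) (c ^+ t)) (commuteX2 _ _ (commute_sym ce)) !mulgA.
rewrite -(mulgA _ (c ^+ _) (c ^+ t)) -expgD.
rewrite -(mulgA _ (e ^+ _) (d ^+ t)) (commuteX2 _ _ (commute_sym de)) !mulgA.
rewrite -(mulgA _ (e ^+ _) (d ^+ u)) (commuteX2 _ _ (commute_sym de)) !mulgA.
by rewrite -(mulgA _ (d ^+ t) (d ^+ u)) -expgD -(mulgA _ (e ^+ _) (e ^+ v)) -expgD.
Qed.

Lemma nf_gen2 g : g \in <<[set x; y]>> -> exists r s t u v, g = nf x y r s t u v.
Proof.
case/gen_prodgP=> n [f xy_f ->]; elim: n f xy_f => [|n IHn] f xy_f.
  by exists 0, 0, 0, 0, 0; rewrite big_ord0 /nf !expg0 !mulg1.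
rewrite big_ord_recr /=.
have [r [s [t [u [v ->]]]]] := IHn _ (fun i => xy_f (widen_ord (leqnSn n) i)).
have := xy_f ord_max; rewrite !inE => /orP[]/eqP->.
  by have [i [j ->]] := nf_mulx r s t u v; exists r.+1, s, i, (t + u), j.
by rewrite nf_muly; exists r, s.+1, t, u, (t + v).
Qed.

Lemma nf_eq_mod P Q R r s t u v r' s' t' u' v' :
  x ^+ P = 1 -> y ^+ Q = 1 -> d ^+ R = 1 -> e ^+ R = 1 -> (R %| 'C(Q, 2))%N ->
  [/\ r = r' %[mod P], s = s' %[mod Q], t = t' %[mod Q], u = u' %[mod R]
     & v = v' %[mod R]] ->
  nf x y r s t u v = nf x y r' s' t' u' v'.
Proof.
move=> xP yQ dR eR /dvdnP[k binQ] [eq_r eq_s eq_t eq_u eq_v].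
have cQ : c ^+ Q = 1.
  by have := commgX_bin Q; rewrite yQ commg1 binQ mulnC expgM eR expg1n mulg1.
by rewrite /nf (expg_eq_mod xP eq_r) (expg_eq_mod yQ eq_s) (expg_eq_mod cQ eq_t)
  (expg_eq_mod dR eq_u) (expg_eq_mod eR eq_v).
Qed.

End Collection.

Section ZpResidue.
Local Open Scope ring_scope.

Lemma Zp_nat_dvd M n : (1 < M)%N -> (M %| n)%N -> (n%:R : 'Z_M) = 0.
Proof. by move=> M_gt1 /eqP dvd; apply: val_inj; rewrite /= val_Zp_nat. Qed.

Lemma Zp_nat_inj M m n : (1 < M)%N -> (m%:R : 'Z_M) = n%:R -> m = n %[mod M].
Proof. by move=> M_gt1 /(congr1 val) /=; rewrite !val_Zp_nat. Qed.

Variables Q R : nat.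
Hypotheses (Q_gt1 : (1 < Q)%N) (R_gt1 : (1 < R)%N) (R_dvd_Q : (R %| Q)%N).

Definition Zp_res (x : 'Z_Q) : 'Z_R := (x : nat)%:R.

Lemma Zp_res_nat n : Zp_res n%:R = n%:R.
Proof.
rewrite /Zp_res val_Zp_nat // {2}(divn_eq n Q) natrD natrM.
by rewrite (Zp_nat_dvd R_gt1 R_dvd_Q) mulr0 add0r.
Qed.

Lemma Zp_resD x y : Zp_res (x + y) = Zp_res x + Zp_res y.
Proof. by rewrite -[x]natr_Zp -[y]natr_Zp -natrD !Zp_res_nat natrD. Qed.

Lemma Zp_res_is_zmod_morphism : zmod_morphism Zp_res.
Proof. by move=> x y; apply/eqP; rewrite eq_sym subr_eq -Zp_resD subrK. Qed.

Lemma Zp_res_is_monoid_morphism : monoid_morphism Zp_res.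
Proof.
split=> [|x y]; first exact: (Zp_res_nat 1).
by rewrite -[x]natr_Zp -[y]natr_Zp -natrM !Zp_res_nat natrM.
Qed.

End ZpResidue.

Section Model.
Local Open Scope ring_scope.

Variables P Q R : nat.
Hypotheses (P_gt1 : (1 < P)%N) (Q_gt1 : (1 < Q)%N) (R_gt1 : (1 < R)%N).
Hypotheses (R_dvd_Q : (R %| Q)%N) (Q_dvd_P : (Q %| P)%N).
Hypotheses (R_dvd_binP : (R %| 'C(P, 2))%N) (R_dvd_binQ : (R %| 'C(Q, 2))%N).

Definition state := ('Z_P * 'Z_Q * 'Z_Q * 'Z_R * 'Z_R * 'Z_R)%type.

Notation res := (@Zp_res Q R).

(* Declared here because [Zp_res] is a ring morphism only when R divides Q. *)
HB.instance Definition _ := GRing.isZmodMorphism.Build _ _ res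
  (Zp_res_is_zmod_morphism Q_gt1 R_gt1 R_dvd_Q).
HB.instance Definition _ := GRing.isMonoidMorphism.Build _ _ res
  (Zp_res_is_monoid_morphism Q_gt1 R_gt1 R_dvd_Q).

(* Right multiplication of a normal form by x, resp. y, read on its exponents
   (r, s, t, u, v); the extra coordinate w tracks 'C(s, 2), on which
   multiplication by x depends. *)
Definition fx (p : state) : state := let: (r, s, t, u, v, w) := p in
  (r + 1, s, t - s, u + res t, v - w, w).
Definition fy (p : state) : state := let: (r, s, t, u, v, w) := p in
  (r, s + 1, t, u, v + res t, w + res s).
Definition fc (p : state) : state := let: (r, s, t, u, v, w) := p in
  (r, s, t + 1, u, v, w).
Definition fd (p : state) : state := let: (r, s, t, u, v, w) := p in
  (r, s, t, u + 1, v, w).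
Definition fe (p : state) : state := let: (r, s, t, u, v, w) := p in
  (r, s, t, u, v + 1, w).

Definition fx_inv (p : state) : state := let: (r, s, t, u, v, w) := p in
  (r - 1, s, t + s, u - res (t + s), v + w, w).
Definition fy_inv (p : state) : state := let: (r, s, t, u, v, w) := p in
  (r, s - 1, t, u, v - res t, w - res (s - 1)).
Definition fc_inv (p : state) : state := let: (r, s, t, u, v, w) := p in
  (r, s, t - 1, u, v, w).
Definition fd_inv (p : state) : state := let: (r, s, t, u, v, w) := p in
  (r, s, t, u - 1, v, w).
Definition fe_inv (p : state) : state := let: (r, s, t, u, v, w) := p in
  (r, s, t, u, v - 1, w).

Ltac state_eq := congr (_, _, _, _, _, _); ring.

Lemma fxK : cancel fx fx_inv. Proof. by case=> [[[[[r s] t] u] v] w]; state_eq. Qed.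
Lemma fyK : cancel fy fy_inv. Proof. by case=> [[[[[r s] t] u] v] w]; state_eq. Qed.
Lemma fcK : cancel fc fc_inv. Proof. by case=> [[[[[r s] t] u] v] w]; state_eq. Qed.
Lemma fdK : cancel fd fd_inv. Proof. by case=> [[[[[r s] t] u] v] w]; state_eq. Qed.
Lemma feK : cancel fe fe_inv. Proof. by case=> [[[[[r s] t] u] v] w]; state_eq. Qed.

Definition px : {perm state} := perm (can_inj fxK).
Definition py : {perm state} := perm (can_inj fyK).
Definition pc : {perm state} := perm (can_inj fcK).
Definition pd : {perm state} := perm (can_inj fdK).
Definition pe : {perm state} := perm (can_inj feK).

Ltac perm_ext :=
  apply/permP=> -[[[[[r s] t] u] v] w]; rewrite ?permM !permE /=; state_eq.

Lemma commg_pxpy : [~ px, py]%g = pc.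
Proof. by apply: (mulgI (py * px)%g); rewrite -commgC; perm_ext. Qed.

Lemma commg_pcpx : [~ pc, px]%g = pd.
Proof. by apply: (mulgI (px * pc)%g); rewrite -commgC; perm_ext. Qed.

Lemma commg_pcpy : [~ pc, py]%g = pe.
Proof. by apply: (mulgI (py * pc)%g); rewrite -commgC; perm_ext. Qed.

Lemma model_lcn4 : ('L_4(<<[set px; py]>>) = 1)%g.
Proof.
by apply: lcn4_gen2; rewrite commg_pxpy ?commg_pcpx ?commg_pcpy; perm_ext.
Qed.

Lemma px_expE n r s t u v w : (px ^+ n)%g (r, s, t, u, v, w) =
  (r + n%:R, s, t - n%:R * s, u + n%:R * res t - 'C(n, 2)%:R * res s,
   v - n%:R * w, w).
Proof.
elim: n => [|n IHn]; first by rewrite expg0 perm1 bin0n /=; state_eq.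
by rewrite expgSr permM IHn permE /= binS bin1 natrD; state_eq.
Qed.

Lemma py_expE n r s t u v w : (py ^+ n)%g (r, s, t, u, v, w) =
  (r, s + n%:R, t, u, v + n%:R * res t, w + n%:R * res s + 'C(n, 2)%:R).
Proof.
elim: n => [|n IHn]; first by rewrite expg0 perm1 bin0n /=; state_eq.
by rewrite expgSr permM IHn permE /= binS bin1 natrD; state_eq.
Qed.

Lemma pc_expE n r s t u v w :
  (pc ^+ n)%g (r, s, t, u, v, w) = (r, s, t + n%:R, u, v, w).
Proof.
elim: n => [|n IHn]; first by rewrite expg0 perm1; state_eq.
by rewrite expgSr permM IHn permE /=; state_eq.
Qed.

Lemma pd_expE n r s t u v w :
  (pd ^+ n)%g (r, s, t, u, v, w) = (r, s, t, u + n%:R, v, w).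
Proof.
elim: n => [|n IHn]; first by rewrite expg0 perm1; state_eq.
by rewrite expgSr permM IHn permE /=; state_eq.
Qed.

Lemma pe_expE n r s t u v w :
  (pe ^+ n)%g (r, s, t, u, v, w) = (r, s, t, u, v + n%:R, w).
Proof.
elim: n => [|n IHn]; first by rewrite expg0 perm1; state_eq.
by rewrite expgSr permM IHn permE /=; state_eq.
Qed.

Lemma px_expP : (px ^+ P)%g = 1%g.
Proof.
have R_dvd_P := dvdn_trans R_dvd_Q Q_dvd_P.
apply/permP=> -[[[[[r s] t] u] v] w]; rewrite px_expE perm1.
rewrite (Zp_nat_dvd P_gt1 (dvdnn P)) (Zp_nat_dvd Q_gt1 Q_dvd_P).
by rewrite (Zp_nat_dvd R_gt1 R_dvd_P) (Zp_nat_dvd R_gt1 R_dvd_binP); state_eq.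
Qed.

Lemma py_expQ : (py ^+ Q)%g = 1%g.
Proof.
apply/permP=> -[[[[[r s] t] u] v] w]; rewrite py_expE perm1.
rewrite (Zp_nat_dvd Q_gt1 (dvdnn Q)) (Zp_nat_dvd R_gt1 R_dvd_Q).
by rewrite (Zp_nat_dvd R_gt1 R_dvd_binQ); state_eq.
Qed.

Lemma pd_expR : (pd ^+ R)%g = 1%g.
Proof.
apply/permP=> -[[[[[r s] t] u] v] w].
by rewrite pd_expE perm1 (Zp_nat_dvd R_gt1 (dvdnn R)); state_eq.
Qed.

Lemma pe_expR : (pe ^+ R)%g = 1%g.
Proof.
apply/permP=> -[[[[[r s] t] u] v] w].
by rewrite pe_expE perm1 (Zp_nat_dvd R_gt1 (dvdnn R)); state_eq.
Qed.

Lemma model_nf_origin r s t u v :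
  nf px py r s t u v (0, 0, 0, 0, 0, 0) =
  (r%:R, s%:R, t%:R, u%:R, v%:R, 'C(s, 2)%:R).
Proof.
rewrite /nf commg_pxpy commg_pcpx commg_pcpy !permM.
by rewrite px_expE py_expE pc_expE pd_expE pe_expE; state_eq.
Qed.

Lemma model_nf_inj r s t u v r' s' t' u' v' :
  nf px py r s t u v = nf px py r' s' t' u' v' ->
  [/\ r = r' %[mod P], s = s' %[mod Q], t = t' %[mod Q], u = u' %[mod R]
    & v = v' %[mod R]].
Proof.
move/(congr1 (fun g : {perm state} => g (0, 0, 0, 0, 0, 0))).
by rewrite !model_nf_origin => -[? ? ? ? ? _]; split; apply: Zp_nat_inj.
Qed.

Lemma nil3_model : exists (hT : finGroupType) (x y : hT),
  [/\ x ^+ P = 1, y ^+ Q = 1, 'L_4(<<[set x; y]>>) = 1,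
      [~ x, y, x] ^+ R = 1 & [~ x, y, y] ^+ R = 1]%g /\
  forall r s t u v r' s' t' u' v',
    nf x y r s t u v = nf x y r' s' t' u' v' ->
    [/\ r = r' %[mod P], s = s' %[mod Q], t = t' %[mod Q],
         u = u' %[mod R] & v = v' %[mod R]].
Proof.
exists _, px, py; split; last exact: model_nf_inj.
split; [exact: px_expP | exact: py_expQ | exact: model_lcn4 | |].
  by rewrite commg_pxpy commg_pcpx pd_expR.
by rewrite commg_pxpy commg_pcpy pe_expR.
Qed.

End Model.

Section Nil3ProductQuotient.
Variables (gT : finGroupType) (G : {group gT}) (a b : gT) (P Q R : nat).
Hypothesis nil3G : is_nil3_product G a b P Q.

Let N := <<[set [~ a, b, a] ^+ R; [~ a, b, b] ^+ R]>>.

Let defG : G :=: <<[set a; b]>>. Proof. by case: nil3G. Qed.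
Let aP : a ^+ P = 1. Proof. by case: nil3G. Qed.
Let bQ : b ^+ Q = 1. Proof. by case: nil3G. Qed.
Let L4G : 'L_4(G) = 1. Proof. by case: nil3G. Qed.
Let Ga : a \in G. Proof. by rewrite defG mem_gen // !inE eqxx. Qed.
Let Gb : b \in G. Proof. by rewrite defG mem_gen // !inE eqxx orbT. Qed.

Let nNG : G \subset 'N(N).
Proof.
rewrite cents_norm // centsC gen_subG subUset !sub1set.
by apply/andP; split; apply/groupX/centP => g Gg; apply: (lcn3_commute L4G).
Qed.

Let Na : a \in 'N(N). Proof. exact: subsetP nNG a Ga. Qed.
Let Nb : b \in 'N(N). Proof. exact: subsetP nNG b Gb. Qed.

Lemma nil3_coset_nf_surj k :
  k \in G / N -> exists r s t u v, k = coset N (nf a b r s t u v).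
Proof.
case/morphimP=> g _ Gg ->; rewrite defG in Gg.
by have [r [s [t [u [v ->]]]]] := nf_gen2 Ga Gb L4G Gg; exists r, s, t, u, v.
Qed.

Lemma nil3_coset_nf_eq r s t u v r' s' t' u' v' : (R %| 'C(Q, 2))%N ->
  [/\ r = r' %[mod P], s = s' %[mod Q], t = t' %[mod Q], u = u' %[mod R]
    & v = v' %[mod R]] ->
  coset N (nf a b r s t u v) = coset N (nf a b r' s' t' u' v').
Proof.
move=> R_dvd_binQ eq_mod; rewrite !morph_nf //.
have L4GN : 'L_4(G / N) = 1 by rewrite -morphim_lcn // L4G morphim1.
apply: (nf_eq_mod (mem_quotient N Ga) (mem_quotient N Gb) L4GN _ _ _ _
  R_dvd_binQ eq_mod); rewrite -?morphR -?morphX ?groupR ?aP ?bQ ?morph1 //= coset_id //.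
  by rewrite mem_gen // !inE eqxx.
by rewrite mem_gen // !inE eqxx orbT.
Qed.

Lemma nil3_coset_nf_inj r s t u v r' s' t' u' v' :
  (1 < P)%N -> (1 < Q)%N -> (1 < R)%N -> (R %| Q)%N -> (Q %| P)%N ->
  (R %| 'C(P, 2))%N -> (R %| 'C(Q, 2))%N ->
  coset N (nf a b r s t u v) = coset N (nf a b r' s' t' u' v') ->
  [/\ r = r' %[mod P], s = s' %[mod Q], t = t' %[mod Q], u = u' %[mod R]
    & v = v' %[mod R]].
Proof.
move=> P_gt1 Q_gt1 R_gt1 R_dvd_Q Q_dvd_P R_dvd_binP R_dvd_binQ eq_coset.
have [hT [x [y [[xP yQ L4xy dR eR] nf_inj]]]] :=
  nil3_model P_gt1 Q_gt1 R_gt1 R_dvd_Q Q_dvd_P R_dvd_binP R_dvd_binQ.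
have [_ _ _ _ univG] := nil3G; have [f [fa fb]] := univG _ _ _ xP yQ L4xy.
apply: nf_inj; rewrite -fa -fb -!morph_nf //.
apply: morph_coset_eq eq_coset; rewrite ?groupM ?groupX ?groupR //.
rewrite gen_subG subUset !sub1set; apply/andP; split; apply/kerP;
  by rewrite ?groupX ?groupR // morphX ?groupR // !morphR ?groupR // fa fb.
Qed.

End Nil3ProductQuotient.

Lemma dvdn_exp2_bin2 k n : (k < n)%N -> (2 ^ k %| 'C(2 ^ n, 2))%N.
Proof.
case: n => // n lt_kn; rewrite bin2 expnS -mulnA mul2n doubleK.
exact/dvdn_mulr/dvdn_exp2l.
Qed.

Theorem theorem5p4 (gT : finGroupType) (G : {group gT}) (a b : gT)
    (alpha beta gamma : nat) :
  (beta <= alpha)%N -> (1 <= beta)%N ->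
  (1 <= gamma)%N -> (gamma < beta)%N ->
  is_nil3_product G a b (2 ^ alpha) (2 ^ beta) ->
  let N := <<[set [~ a, b, a] ^+ (2 ^ gamma); [~ a, b, b] ^+ (2 ^ gamma)]>> in
  let w := fun r s t u v : nat =>
    coset N (a ^+ r * b ^+ s * [~ a, b] ^+ t * [~ a, b, a] ^+ u
             * [~ a, b, b] ^+ v) in
  (forall k, k \in G / N -> exists r s t u v, k = w r s t u v) /\
  (forall r s t u v r' s' t' u' v',
     w r s t u v = w r' s' t' u' v' <->
     [/\ r = r' %[mod 2 ^ alpha], s = s' %[mod 2 ^ beta],
         t = t' %[mod 2 ^ beta], u = u' %[mod 2 ^ gamma]
       & v = v' %[mod 2 ^ gamma]]).
Proof.
move=> le_ba b_gt0 g_gt0 lt_gb nil3G N w.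
have exp2_gt1 n : (0 < n)%N -> (1 < 2 ^ n)%N.
  by move=> n_gt0; rewrite -(expn0 2) ltn_exp2l.
have a_gt1 := exp2_gt1 _ (leq_trans b_gt0 le_ba).
have b_gt1 := exp2_gt1 _ b_gt0.
have g_gt1 := exp2_gt1 _ g_gt0.
have g_dvd_b := dvdn_exp2l 2 (ltnW lt_gb).
have b_dvd_a := dvdn_exp2l 2 le_ba.
have g_dvd_bina := dvdn_exp2_bin2 (leq_trans lt_gb le_ba).
have g_dvd_binb := dvdn_exp2_bin2 lt_gb.
split=> [k /(nil3_coset_nf_surj nil3G) // | r s t u v r' s' t' u' v'].
split; first exact: (nil3_coset_nf_inj nil3G).
exact: (nil3_coset_nf_eq nil3G).
Qed.
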